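(* Let $K,\bar M\ge 1$ be integers, $\lambda>0$, $d>0$, $D>0$, and let $\xi_1,\dots,\xi_K$ be independent random variables, each uniformly distributed on $[0,D]$. Consider the array of $K\bar M$ sensors with positions $\zeta_{(k,m)}=\xi_k+(m-1)d$, $k=1,\dots,K$, $m=1,\dots,\bar M$. For an angle $\theta\in(-\pi/2,\pi/2)$ let $\bm g(\theta)\in\mathbb{C}^{K\bar M}$ have entries $\exp(\jmath\frac{2\pi}{\lambda}\zeta_{(k,m)}\sin\theta)$ (with $\jmath=\sqrt{-1}$). For fixed angles $\theta_i,\theta_j$ define $$\mathcal G_{i,j}=\frac{\bm g(\theta_j)^H\bm g(\theta_i)}{\|\bm g(\theta_i)\|_2\,\|\bm g(\theta_j)\|_2},$$ and set $\varphi_{i,j}=\frac{\pi d}{\lambda}(\sin\theta_i-\sin\theta_j)$, $\rho_{i,j}=\frac{\pi D}{\lambda}(\sin\theta_i-\sin\theta_j)$, $\mathcal M_{i,j}=\frac{\sin(\bar M\varphi_{i,j})}{\bar M\sin\varphi_{i,j}}$. Then $$\big|\mathbb{E}[\mathcal G_{i,j}]\big|=|\mathcal M_{i,j}|\cdot\left|\frac{\sin\rho_{i,j}}{\rho_{i,j}}\right|,\qquad \mathbb{E}\big[|\mathcal G_{i,j}|^2\big]=|\mathcal M_{i,j}|^2\left(\frac1K+\Big(1-\frac1K\Big)\left|\frac{\sin\rho_{i,j}}{\rho_{i,j}}\right|^2\right),$$ with $\sin(0)/0$ and $\frac{\sin(\bar M\varphi)}{\bar M\sin\varphi}$ at zeros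 of $\sin\varphi$ interpreted by their limiting values.
   Context: This describes a fully calibrated distributed array of $K$ identical uniform linear subarrays, each with $\bar M$ sensors at spacing $d$; $\xi_k$ is the position of the first sensor of the $k$-th subarray, $D$ the whole array aperture, $\lambda$ the wavelength; $\mathcal G_{i,j}$ is the angular correlation coefficient between steering vectors for directions $\theta_i$ and $\theta_j$. *)

From HB Require Import structures.
From mathcomp Require Import all_boot all_order all_algebra.
From mathcomp Require Import all_classical all_reals all_analysis.
From mathcomp Require Import complex.
Set Implicit Arguments. Unset Strict Implicit. Unset Printing Implicit Defensive.
Import Order.TTheory GRing.Theory Num.Theory.
Import numFieldNormedType.Exports.
Local Open Scope classical_set_scope.
Local Open Scope ring_scope.
Local Open Scope complex_scope.

Section defs.
Variable R : realType.

Definition expj (t : R) : R[i] := Complex (cos t) (sin t).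

(* position of sensor (k, m) (m is 0-based here: m = 0 .. Mbar-1,
   so m%:R * d = ((m+1)-1) d in the paper's 1-based indexing) *)
Definition sensor_pos (K Mbar : nat) (d : R) (xi : 'I_K -> R)
  (k : 'I_K) (m : 'I_Mbar) : R := xi k + m%:R * d.

Definition steer (K Mbar : nat) (lam d : R) (xi : 'I_K -> R) (th : R)
  (k : 'I_K) (m : 'I_Mbar) : R[i] :=
  expj (2 * pi / lam * sensor_pos d xi k m * sin th).

Definition herm (K Mbar : nat) (u v : 'I_K -> 'I_Mbar -> R[i]) : R[i] :=
  \sum_(k < K) \sum_(m < Mbar) (conjc (u k m) * v k m).

Definition norm2 (K Mbar : nat) (u : 'I_K -> 'I_Mbar -> R[i]) : R :=
  Num.sqrt (\sum_(k < K) \sum_(m < Mbar) Normc.normc (u k m) ^+ 2).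

Definition corr_coef (K Mbar : nat) (lam d : R) (xi : 'I_K -> R)
  (thi thj : R) : R[i] :=
  let gi := @steer K Mbar lam d xi thi in
  let gj := @steer K Mbar lam d xi thj in
  herm gj gi / (norm2 gi * norm2 gj)%:C.

Definition sinc (x : R) : R := if x == 0 then 1 else sin x / x.

(* sin(Mbar phi) / (Mbar sin phi), with its limiting value
   cos(Mbar phi) / cos phi at the zeros of sin phi *)
Definition Mfactor (Mbar : nat) (phi : R) : R :=
  if sin phi == 0 then cos (Mbar%:R * phi) / cos phi
  else sin (Mbar%:R * phi) / (Mbar%:R * sin phi).

End defs.

Definition mutually_independent (d : measure_display) (T : measurableType d)
  (R : realType) (P : probability T R) (n : nat)
  (X : 'I_n -> {RV P >-> R}) : Prop :=
  forall (J : {set 'I_n}) (A : 'I_n -> set R),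
    (forall k, measurable (A k)) ->
    P (\bigcap_(k in [set k | k \in J]) (X k @^-1` A k)) =
    (\prod_(k in J) P (X k @^-1` A k))%E.

Definition cexpectation (d : measure_display) (T : measurableType d)
  (R : realType) (P : probability T R) (Z : T -> R[i]) : R[i] :=
  Complex (fine ('E_P[fun w => complex.Re (Z w)])) (fine ('E_P[fun w => complex.Im (Z w)])).

From HB Require Import structures.
From mathcomp Require Import all_boot all_order all_algebra.
From mathcomp Require Import all_classical all_reals all_analysis.
From mathcomp Require Import complex measurable_realfun ring.
Import Order.TTheory GRing.Theory Num.Theory.
Import numFieldNormedType.Exports.
Local Open Scope classical_set_scope.
Local Open Scope ring_scope.
Set Implicit Arguments. Unset Strict Implicit. Unset Printing Implicit Defensive.

(* The correlation coefficient factors as G = S * A / (K Mbar), where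
   S = \sum_k expj (a xi_k), with a = 2 pi (sin thi - sin thj) / lam, carries all
   the randomness, and A = \sum_m expj (2 m phi) is a geometric sum with
   |A| = Mbar |Mfactor Mbar phi|.  For xi uniform on [0, D], E [expj (a xi)] is the
   characteristic function (expj (a D) - 1) / (j a D), whose modulus is
   |sinc (a D / 2)| = |sinc rho|; linearity gives E [G].  For the second moment,
   |S|^2 = \sum_(k, l) cos (a (xi_k - xi_l)): the K diagonal terms equal 1 and, by
   independence, every off-diagonal term has mean |E [expj (a xi)]|^2. *)

Lemma normr_le_addr_ge0 (R : realDomainType) (c x : R) : `|x| <= c -> 0 <= c + x.
Proof. by rewrite -lerBlDl sub0r ler_norml => /andP[]. Qed.

Section Phasors.
Context (R : realType).
Local Open Scope complex_scope.
Implicit Types x y : R.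

Lemma complex_sumE n (z : 'I_n -> R[i]) :
  \sum_(i < n) z i = (\sum_(i < n) complex.Re (z i)) +i* (\sum_(i < n) complex.Im (z i)).
Proof.
elim: n z => [|n IH] z; first by rewrite !big_ord0.
by rewrite !big_ord_recr /= IH; case: (z ord_max).
Qed.

Lemma expjD x y : expj (x + y) = expj x * expj y.
Proof. by rewrite /expj cosD sinD; congr (_ +i* _); ring. Qed.

Lemma expjN x : conjc (expj x) = expj (- x).
Proof. by rewrite /expj /conjc cosN sinN. Qed.

Lemma normc_expj x : Normc.normc (expj x) = 1.
Proof. by rewrite /= cos2Dsin2 sqrtr1. Qed.

Lemma sqr_normc_coord (a b : R) : Normc.normc (a +i* b) ^+ 2 = a ^+ 2 + b ^+ 2.
Proof. by rewrite /= sqr_sqrtr // addr_ge0 // sqr_ge0. Qed.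

Lemma sqr_normc_sum_expj n (y : 'I_n -> R) :
  Normc.normc (\sum_(k < n) expj (y k)) ^+ 2 =
  \sum_(k < n) \sum_(l < n) cos (y k - y l).
Proof.
rewrite complex_sumE sqr_normc_coord !expr2 !mulr_suml -big_split /=.
apply: eq_bigr => k _; rewrite !mulr_sumr -big_split /=.
by apply: eq_bigr => l _; rewrite cosB.
Qed.

Lemma normc_nat n : Normc.normc (n%:R : R[i]) = n%:R.
Proof.
by rewrite -(rmorph_nat (real_complex R)) /= expr0n addr0 sqrtr_sqr ger0_norm.
Qed.

End Phasors.

Section ArrayFactor.
Context (R : realType).
Local Open Scope complex_scope.
Implicit Types y : R.

Definition array_factor (M : nat) y : R[i] := \sum_(m < M) expj (m%:R * y).

Lemma norm2_steer K M (lam d : R) (x : 'I_K -> R) th :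
  norm2 (@steer R K M lam d x th) = Num.sqrt (K * M)%:R.
Proof.
rewrite /norm2; congr Num.sqrt.
under eq_bigr do under eq_bigr do rewrite /steer normc_expj expr1n.
by rewrite !sumr_const !card_ord natrM mulr_natl.
Qed.

Lemma corr_coefE K M (lam d : R) (x : 'I_K -> R) thi thj :
  @corr_coef R K M lam d x thi thj =
  (\sum_(k < K) expj (2 * pi / lam * (sin thi - sin thj) * x k)) *
  array_factor M (2 * (pi * d / lam * (sin thi - sin thj))) / (K * M)%:R.
Proof.
rewrite /corr_coef !norm2_steer -expr2 sqr_sqrtr ?ler0n //.
rewrite (rmorph_nat (real_complex R)); congr (_ / _).
rewrite /herm /array_factor mulr_suml; apply: eq_bigr => k _.
rewrite mulr_sumr; apply: eq_bigr => m _.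
by rewrite /steer expjN -!expjD /sensor_pos; congr expj; ring.
Qed.

Lemma sin_natmul_eq0 y n : sin y = 0 -> sin (n%:R * y) = 0.
Proof.
move=> sy0; elim: n => [|n IH]; first by rewrite mul0r sin0.
by rewrite -addn1 natrD mulrDl mul1r sinD IH sy0 mul0r mulr0 addr0.
Qed.

Lemma normr_cos_natmul y n : sin y = 0 -> `|cos (n%:R * y)| = 1.
Proof.
move=> sy0; rewrite -sqrtr_sqr cos2sin2 (sin_natmul_eq0 n sy0).
by rewrite expr0n subr0 sqrtr1.
Qed.

Lemma array_factor_sin0 M y : sin y = 0 -> array_factor M (2 * y) = M%:R.
Proof.
move=> sy0; rewrite /array_factor (eq_bigr (fun=> 1)) ?sumr_const ?card_ord //.
move=> m _; have smy0 := sin_natmul_eq0 m sy0.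
have -> : m%:R * (2 * y) = m%:R * y + m%:R * y by ring.
rewrite expjD /expj smy0; apply/eqP; rewrite eq_complex /=.
by rewrite !mulr0 mul0r addr0 subr0 -expr2 cos2sin2 smy0 expr0n subr0 !eqxx.
Qed.

Lemma array_factor_telescope M y :
  array_factor M y * (expj y - 1) = expj (M%:R * y) - 1.
Proof.
rewrite /array_factor mulr_suml -(big_mkord xpredT (fun m => expj (m%:R * y) * (expj y - 1))).
rewrite (telescope_sumr_eq (fun m => expj (m%:R * y))) // => [|m _].
  by rewrite mul0r /expj cos0 sin0.
by rewrite mulrBr mulr1 -expjD -addn1 natrD mulrDl mul1r.
Qed.

Lemma normc_expjB1 y : Normc.normc (expj (2 * y) - 1) = 2 * `|sin y|.
Proof.
have -> : 2 * y = y + y by ring.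
rewrite expjD /expj /= (_ : _ + _ = (2 * sin y) ^+ 2).
  by rewrite sqrtr_sqr normrM ger0_norm.
transitivity ((cos y * cos y - sin y * sin y - 1) ^+ 2 + 4 * sin y ^+ 2 * (cos y * cos y)).
  by ring.
by rewrite -!expr2 cos2sin2; ring.
Qed.

Lemma normc_array_factor M y : (0 < M)%N ->
  Normc.normc (array_factor M (2 * y)) = M%:R * `|Mfactor M y|.
Proof.
move=> M0; rewrite /Mfactor; have [/eqP sy0|sy0] := ifPn.
  have := normr_cos_natmul 1 sy0; rewrite mul1r => cos_y.
  by rewrite array_factor_sin0 // normc_nat normf_div cos_y normr_cos_natmul // divr1 mulr1.
have /(congr1 (@Normc.normc R)) := array_factor_telescope M (2 * y).
rewrite Normc.normcM (_ : M%:R * (2 * y) = 2 * (M%:R * y)); last by ring.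
rewrite !normc_expjB1 => eq_norm.
have sy0' : `|sin y| != 0 by rewrite normr_eq0.
have M0' : M%:R != 0 :> R by rewrite pnatr_eq0 -lt0n.
rewrite normf_div normrM normr_nat.
apply: (mulIf (_ : 2 * `|sin y| != 0)); first by rewrite mulf_neq0.
by rewrite eq_norm; field; rewrite sy0' M0'.
Qed.

End ArrayFactor.

Section UniformCharfun.
Context (R : realType).
Local Open Scope complex_scope.

(* (expj (a D) - 1) / (j a D) in coordinates, with its limit 1 at a = 0. *)
Definition uniform_charfun (D a : R) : R[i] :=
  if a == 0 then 1 else (sin (a * D) / (a * D)) +i* ((1 - cos (a * D)) / (a * D)).

Lemma uniform_charfunM (D a : R) : a * D != 0 ->
  uniform_charfun D a * (0 +i* (a * D)) = expj (a * D) - 1.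
Proof.
move=> aD0; have a0 : a != 0 by apply: contraNneq aD0 => ->; rewrite mul0r.
rewrite /uniform_charfun (negbTE a0) /expj; apply/eqP.
by rewrite eq_complex /= !mulr0 add0r addr0 !divfK // opprB subr0 !eqxx.
Qed.

Lemma normc_uniform_charfun (D a : R) : D != 0 ->
  Normc.normc (uniform_charfun D a) = `|sinc (a * D / 2)|.
Proof.
move=> D0; rewrite /sinc; have [->|a0] := eqVneq a 0.
  by rewrite /uniform_charfun !mul0r !eqxx Normc.normc1 normr1.
set r := a * D / 2; have r0 : r != 0 by rewrite !mulf_neq0 ?invr_eq0.
have aDE : a * D = 2 * r by rewrite /r; field.
have aD0 : a * D != 0 by rewrite aDE mulf_neq0.
have /(congr1 (@Normc.normc R)) := uniform_charfunM aD0.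
have normc_2ri : Normc.normc (0 +i* (2 * r)) = 2 * `|r|.
  by rewrite /= expr0n add0r sqrtr_sqr normrM ger0_norm.
rewrite Normc.normcM aDE normc_expjB1 normc_2ri (negbTE r0) => eq_norm.
have nr0 : `|r| != 0 by rewrite normr_eq0.
apply: (mulIf (_ : 2 * `|r| != 0)); first by rewrite mulf_neq0.
by rewrite eq_norm normf_div; field.
Qed.

End UniformCharfun.

Section UniformIntegrals.
Context (R : realType).
Implicit Types (a x : R) (f F : R -> R).

Lemma continuous_scale f a : continuous f -> continuous (fun x => f (a * x)).
Proof.
move=> cf x; apply: continuous_comp; last exact: cf.
by apply: continuousM; [exact: cst_continuous | exact: cvg_id].
Qed.

Lemma integral_itv_antiderivative f F (l r : R) : l < r -> continuous f ->
  (forall x, is_derive x 1 F (f x)) ->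
  (\int[lebesgue_measure]_(x in `[l, r]) (f x)%:E = (F r - F l)%:E)%E.
Proof.
move=> lr cf dF.
have cF : continuous F.
  by move=> x; apply/differentiable_continuous/derivable1_diffP; case: (dF x).
rewrite EFinB; apply: continuous_FTC2 lr _ _ _ => //.
- exact: continuous_subspaceT.
- split; first by move=> x _; case: (dF x).
  + exact/cvg_at_right_filter/cF.
  + exact/cvg_at_left_filter/cF.
- by move=> x _; rewrite derive1E; case: (dF x).
Qed.

Variables (D : R) (hD : 0 < D).

(* [integral_uniform] only covers nonnegative integrands, hence the shifts by 1
   in the next two lemmas. *)
Lemma integral_uniform_antiderivative f F : continuous f -> (forall x, 0 <= f x) ->
  (forall x, is_derive x 1 F (f x)) ->
  (\int[uniform_prob hD]_x (f x)%:E = ((F D - F 0) / D)%:E)%E.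
Proof.
move=> cf f0 dF; rewrite integral_uniform //; last first.
  by apply/measurable_EFinP; exact: continuous_measurable_fun.
by rewrite subr0 (integral_itv_antiderivative hD cf dF) -EFinM mulrC.
Qed.

Let continuous_1Dscale f a : continuous f -> continuous (fun x => 1 + f (a * x)).
Proof.
move=> cf x; apply: continuousD; first exact: cst_continuous.
exact: continuous_scale cf x.
Qed.

Let D0 : D != 0. Proof. by rewrite gt_eqF. Qed.

Lemma integral_uniform_1Dcos a :
  (\int[uniform_prob hD]_x (1 + cos (a * x))%:E =
   (1 + complex.Re (uniform_charfun D a))%:E)%E.
Proof.
have c1cos b := continuous_1Dscale (a := b) (@continuous_cos R).
have ge0_1cos b x : 0 <= 1 + cos (b * x) by rewrite normr_le_addr_ge0 ?cos_max.
rewrite /uniform_charfun; have [->|a0] := eqVneq a 0.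
  have dF x : is_derive x 1 (fun y => y + y) (1 + cos (0 * x)).
    by rewrite -[fun y => _]/(id + id); apply: is_derive_eq; rewrite mul0r cos0.
  rewrite (integral_uniform_antiderivative (c1cos 0) (ge0_1cos 0) dF) /=.
  by congr EFin; field.
have dF x : is_derive x 1 (fun y => y + a^-1 * sin (a * y)) (1 + cos (a * x)).
  rewrite -[fun y => _]/(id + a^-1 \*: (fun y => sin (a * y))); apply: is_derive_eq.
  by rewrite -[a%:A]/(a * 1) mulr1 -[_ *: _]/(a^-1 * _) mulrCA mulVf // mulr1.
rewrite (integral_uniform_antiderivative (c1cos a) (ge0_1cos a) dF) /=.
by rewrite mulr0 sin0 mulr0 !addr0 subr0; congr EFin; field; rewrite a0 D0.
Qed.

Lemma integral_uniform_1Dsin a :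
  (\int[uniform_prob hD]_x (1 + sin (a * x))%:E =
   (1 + complex.Im (uniform_charfun D a))%:E)%E.
Proof.
have c1sin b := continuous_1Dscale (a := b) (@continuous_sin R).
have ge0_1sin b x : 0 <= 1 + sin (b * x) by rewrite normr_le_addr_ge0 ?sin_max.
rewrite /uniform_charfun; have [->|a0] := eqVneq a 0.
  have dF x : is_derive x 1 id (1 + sin (0 * x)).
    by apply: is_derive_eq; rewrite mul0r sin0 addr0.
  rewrite (integral_uniform_antiderivative (c1sin 0) (ge0_1sin 0) dF) /=.
  by rewrite subr0 divff ?addr0.
have dF x : is_derive x 1 (fun y => y - a^-1 * cos (a * y)) (1 + sin (a * x)).
  rewrite -[fun y => _]/(id - a^-1 \*: (fun y => cos (a * y))); apply: is_derive_eq.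
  by rewrite -[a%:A]/(a * 1) mulr1 -[_ *: _]/(a^-1 * _) mulNr mulrN opprK mulrCA mulVf // mulr1.
rewrite (integral_uniform_antiderivative (c1sin a) (ge0_1sin a) dF) /=.
by rewrite mulr0 cos0 mulr1; congr EFin; field; rewrite a0 D0.
Qed.

End UniformIntegrals.

Section Mean.
Context (R : realType) (dT : measure_display) (T : measurableType dT).
Variable P : probability T R.
Implicit Types f g : T -> R.

Definition bounded_measurable f :=
  measurable_fun setT f /\ exists c : R, forall w, `|f w| <= c.

(* [fine] sends infinite expectations to 0, so the lemmas below assume
   [bounded_measurable]. *)
Definition mean f : R := fine 'E_P[f]%E.

Lemma bounded_measurable_Lfun1 f : bounded_measurable f -> f \in Lfun P 1.
Proof.
move=> [mf [c fc]]; apply/Lfun1_integrable.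
apply: measurable_bounded_integrable => //.
  by rewrite (le_lt_trans (probability_le1 P _)) ?ltry.
exists c; split; first by rewrite num_real.
by move=> c' cc' x _ /=; rewrite (le_trans (fc x)) // ltW.
Qed.

Lemma meanE f : bounded_measurable f -> 'E_P[f]%E = (mean f)%:E.
Proof. by move=> /bounded_measurable_Lfun1 f1; rewrite fineK // expectation_fin_num. Qed.

Lemma integral_meanE f : bounded_measurable f -> (\int[P]_w (f w)%:E = (mean f)%:E)%E.
Proof. by move=> bf; rewrite -meanE // unlock. Qed.

Lemma bounded_measurable_cst c : bounded_measurable (fun=> c).
Proof. by split; [exact: measurable_cst | exists `|c|]. Qed.

Lemma bounded_measurableD f g : bounded_measurable f -> bounded_measurable g ->
  bounded_measurable (fun w => f w + g w).
Proof.
move=> [mf [c fc]] [mg [c' gc']]; split; first exact: measurable_funD.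
by exists (c + c') => w; rewrite (le_trans (ler_normD _ _)) // lerD.
Qed.

Lemma bounded_measurableM f g : bounded_measurable f -> bounded_measurable g ->
  bounded_measurable (fun w => f w * g w).
Proof.
move=> [mf [c fc]] [mg [c' gc']]; split; first exact: measurable_funM.
by exists (c * c') => w; rewrite normrM ler_pM.
Qed.

Lemma bounded_measurable_sum n (F : 'I_n -> T -> R) :
  (forall i, bounded_measurable (F i)) ->
  bounded_measurable (fun w => \sum_(i < n) F i w).
Proof.
elim: n F => [|n IH] F bF.
  by under eq_fun do rewrite big_ord0; exact: bounded_measurable_cst.
under eq_fun do rewrite big_ord_recr /=.
by apply: bounded_measurableD; [exact: IH | exact: bF].
Qed.

Lemma mean_cst c : mean (fun=> c) = c.
Proof. by rewrite /mean expectation_cst. Qed.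

Lemma meanD f g : bounded_measurable f -> bounded_measurable g ->
  mean (fun w => f w + g w) = mean f + mean g.
Proof.
move=> bf bg; rewrite /mean [X in 'E_P[X]%E](_ : _ = (f \+ g)%R) //.
by rewrite expectationD ?bounded_measurable_Lfun1 // (meanE bf) (meanE bg).
Qed.

Lemma meanZ k f : bounded_measurable f -> mean (fun w => k * f w) = k * mean f.
Proof.
move=> bf; rewrite /mean [X in 'E_P[X]%E](_ : _ = (k \o* f)%R); last first.
  by apply/funext => w /=; rewrite mulrC.
by rewrite expectationZl ?bounded_measurable_Lfun1 // (meanE bf).
Qed.

Lemma mean_sum n (F : 'I_n -> T -> R) : (forall i, bounded_measurable (F i)) ->
  mean (fun w => \sum_(i < n) F i w) = \sum_(i < n) mean (F i).
Proof.
elim: n F => [|n IH] F bF.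
  by under eq_fun do rewrite big_ord0; rewrite big_ord0 mean_cst.
under eq_fun do rewrite big_ord_recr /=.
rewrite meanD ?big_ord_recr ?IH //.
exact: bounded_measurable_sum.
Qed.

End Mean.

Section Independence.
Context (R : realType) (dT : measure_display) (T : measurableType dT).
Variable P : probability T R.
Implicit Types (X Y : {RV P >-> R}) (f g : R -> R).

Definition pair_RV X Y : T -> R * R := fun w => (X w, Y w).

Lemma pair_RV_measurable X Y : measurable_fun setT (pair_RV X Y).
Proof. exact: measurable_fun_pair. Qed.

HB.instance Definition _ X Y :=
  isMeasurableFun.Build _ _ _ _ (pair_RV X Y) (pair_RV_measurable X Y).

Definition indep_RV X Y := forall A B, measurable A -> measurable B ->
  P (X @^-1` A `&` Y @^-1` B) = (P (X @^-1` A) * P (Y @^-1` B))%E.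

(* [uniform_prob] is a measure on [measurableTypeR R], which carries the
   sigma-algebra of [R] through a different structure instance. *)
Lemma ge0_integral_law X (mu : {measure set (measurableTypeR R) -> \bar R}) :
  (forall A, measurable A -> P (X @^-1` A) = mu A) ->
  forall f, measurable_fun [set: measurableTypeR R] f -> (forall x, 0 <= f x) ->
  (\int[P]_w (f (X w))%:E = \int[mu]_x (f x)%:E)%E.
Proof.
move=> lawX f mf f0.
have mX : measurable_fun setT (X : T -> measurableTypeR R) := measurable_funPT X.
transitivity (\int[pushforward P (X : T -> measurableTypeR R)]_x (f x)%:E)%E.
  rewrite (ge0_integral_pushforward mX) //; first exact/measurable_EFinP.
  by move=> y _; rewrite lee_fin.
by apply: eq_measure_integral => A mA _; rewrite -lawX.
Qed.

Lemma ge0_integral_indep X Y : indep_RV X Y ->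
  forall f g, measurable_fun setT f -> measurable_fun setT g ->
  (forall x, 0 <= f x) -> (forall x, 0 <= g x) ->
  (\int[P]_w (f (X w) * g (Y w))%:E =
   \int[P]_w (f (X w))%:E * \int[P]_w (g (Y w))%:E)%E.
Proof.
move=> indepXY f g mf mg f0 g0.
pose h (z : R * R) := (f z.1 * g z.2)%:E.
have mh : measurable_fun setT h.
  apply/measurable_EFinP/measurable_funM.
    exact: measurableT_comp mf measurable_fst.
  exact: measurableT_comp mg measurable_snd.
have h0 z : (0 <= h z)%E by rewrite lee_fin mulr_ge0.
rewrite -[LHS]/(\int[P]_w (h \o pair_RV X Y) w)%E -ge0_integral_distribution //.
rewrite (eq_measure_integral (distribution P X \x distribution P Y)%E); last first.
  by move=> A mA _; apply/esym/product_measure_unique.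
rewrite fubini_tonelli1 // /fubini_F /h /=.
under eq_integral => x _.
  under eq_integral => y _ do rewrite EFinM.
  rewrite ge0_integralZl //; first over.
  - exact/measurable_EFinP.
  - by move=> y _; rewrite lee_fin.
  - by rewrite lee_fin.
rewrite /= ge0_integralZr //.
- by congr (_ * _)%E; apply: ge0_integral_distribution => //; exact/measurable_EFinP.
- exact/measurable_EFinP.
- by move=> x _; rewrite lee_fin.
- by apply: integral_ge0 => y _; rewrite lee_fin.
Qed.

Lemma bounded_measurable_comp X f c : measurable_fun setT f ->
  (forall x, `|f x| <= c) -> bounded_measurable (fun w => f (X w)).
Proof. by move=> mf fc; split; [exact: measurableT_comp | exists c]. Qed.

Lemma mean_law X (mu : {measure set (measurableTypeR R) -> \bar R}) :
  (forall A, measurable A -> P (X @^-1` A) = mu A) ->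
  forall f c e, measurable_fun [set: measurableTypeR R] f -> (forall x, `|f x| <= c) ->
  (\int[mu]_x (c + f x)%:E = (c + e)%:E)%E -> mean P (fun w => f (X w)) = e.
Proof.
move=> lawX f c e mf fc int_cf.
have cf_ge0 x : 0 <= c + f x by exact: normr_le_addr_ge0.
have bfX := bounded_measurable_comp X mf fc.
have bc : bounded_measurable (fun _ : T => c) by exact: bounded_measurable_cst.
have := ge0_integral_law lawX (measurable_funD (measurable_cst c) mf) cf_ge0.
rewrite int_cf integral_meanE /=; last exact: bounded_measurableD.
by case; rewrite meanD // mean_cst => /addrI.
Qed.

(* Shifting by the bound [c] reduces to nonnegative integrands. *)
Lemma mean_indep X Y : indep_RV X Y ->
  forall f g c, measurable_fun setT f -> measurable_fun setT g ->
  (forall x, `|f x| <= c) -> (forall x, `|g x| <= c) ->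
  mean P (fun w => f (X w) * g (Y w)) =
  mean P (fun w => f (X w)) * mean P (fun w => g (Y w)).
Proof.
move=> indepXY f g c mf mg fc gc.
have bX := bounded_measurable_comp X mf fc.
have bY := bounded_measurable_comp Y mg gc.
have ge0_cD (h : R -> R) : (forall x, `|h x| <= c) -> forall x, 0 <= c + h x.
  by move=> hc x; exact: normr_le_addr_ge0.
have := ge0_integral_indep indepXY (f := fun x => c + f x) (g := fun x => c + g x)
  (measurable_funD (measurable_cst c) mf) (measurable_funD (measurable_cst c) mg)
  (ge0_cD f fc) (ge0_cD g gc).
rewrite !integral_meanE -?EFinM /=; first case.
  rewrite (_ : (fun w => (c + f (X w)) * (c + g (Y w))) =
    (fun w => c * c + (c * f (X w) + c * g (Y w)) + f (X w) * g (Y w))); last first.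
    by apply/funext => w; ring.
  rewrite !meanD ?meanZ ?mean_cst; first move=> expand.
    apply: (addrI (c * c + (c * mean P (fun w => f (X w)) + c * mean P (fun w => g (Y w))))).
    by rewrite expand; ring.
all: by repeat first [exact: bounded_measurable_cst | apply: bounded_measurableD |
  apply: bounded_measurableM].
Qed.

End Independence.

Lemma mutually_independent_pair (R : realType) (dT : measure_display)
  (T : measurableType dT) (P : probability T R) n (X : 'I_n -> {RV P >-> R}) :
  mutually_independent X -> forall k l, k != l -> indep_RV (X k) (X l).
Proof.
move=> indepX k l kl A B mA mB; have lk : l != k by rewrite eq_sym.
pose AB i := if i == k then A else B.
have mAB i : measurable (AB i) by rewrite /AB; case: ifP.
have := indepX [set k; l]%SET AB mAB.
rewrite big_setU1 ?inE // big_set1E /AB eqxx (negbTE lk) /= mule1 => <-.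
congr (P _); apply/seteqP; split => [w [Ak Bl] i | w kl_w].
  by rewrite /= !inE => /orP[] /eqP ->; rewrite ?eqxx ?(negbTE lk).
by split; [have := kl_w k | have := kl_w l]; rewrite /= !inE ?eqxx ?orbT ?(negbTE lk); apply.
Qed.

Section ComplexMean.
Context (R : realType) (dT : measure_display) (T : measurableType dT).
Variable P : probability T R.
Local Open Scope complex_scope.
Implicit Types Z : T -> R[i].

Definition cbounded_measurable Z :=
  bounded_measurable (fun w => complex.Re (Z w)) /\
  bounded_measurable (fun w => complex.Im (Z w)).

Lemma cexpectationE Z :
  cexpectation P Z = mean P (fun w => complex.Re (Z w)) +i* mean P (fun w => complex.Im (Z w)).
Proof. by []. Qed.

Lemma cexpectation_sum n (Z : 'I_n -> T -> R[i]) :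
  (forall i, cbounded_measurable (Z i)) ->
  cexpectation P (fun w => \sum_(i < n) Z i w) = \sum_(i < n) cexpectation P (Z i).
Proof.
move=> bZ; rewrite [RHS]complex_sumE !cexpectationE /=.
under eq_fun do rewrite complex_sumE /=.
under [X in _ +i* mean P X]eq_fun do rewrite complex_sumE /=.
by rewrite !mean_sum // => i; have [] := bZ i.
Qed.

Lemma cbounded_measurable_sum n (Z : 'I_n -> T -> R[i]) :
  (forall i, cbounded_measurable (Z i)) ->
  cbounded_measurable (fun w => \sum_(i < n) Z i w).
Proof.
move=> bZ; split; under eq_fun do rewrite complex_sumE /=;
  by apply: bounded_measurable_sum => i; have [] := bZ i.
Qed.

Lemma cexpectationMr Z c : cbounded_measurable Z ->
  cexpectation P (fun w => Z w * c) = cexpectation P Z * c.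
Proof.
case: c => a b [bRe bIm]; rewrite !cexpectationE /=.
have ReM z : complex.Re (z * (a +i* b)) = a * complex.Re z + (- b) * complex.Im z.
  by case: z => x y /=; ring.
have ImM z : complex.Im (z * (a +i* b)) = b * complex.Re z + a * complex.Im z.
  by case: z => x y /=; ring.
under eq_fun do rewrite ReM; under [X in _ +i* mean P X]eq_fun do rewrite ImM.
rewrite !meanD ?meanZ //; first by congr (_ +i* _); ring.
all: by apply: bounded_measurableM => //; exact: bounded_measurable_cst.
Qed.

End ComplexMean.

Section UniformPhases.
Context (R : realType) (dT : measure_display) (T : measurableType dT).
Variables (P : probability T R) (K : nat) (D : R) (hD : 0 < D).
Variable xi : 'I_K -> {RV P >-> R}.
Hypothesis xi_unif : forall k A, measurable A -> P (xi k @^-1` A) = uniform_prob hD A.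
Hypothesis xi_indep : mutually_independent xi.
Variable a : R.

Let measurable_scale (t : R -> R) : continuous t ->
  measurable_fun [set: measurableTypeR R] (fun x => t (a * x)).
Proof. by move=> ct; apply: continuous_measurable_fun; exact: continuous_scale. Qed.

Let bounded_measurable_scale (t : R -> R) k : continuous t -> (forall x, `|t x| <= 1) ->
  bounded_measurable (fun w => t (a * xi k w)).
Proof.
move=> ct t1.
exact: (bounded_measurable_comp (xi k) (f := fun x => t (a * x)) (measurable_scale ct)).
Qed.

Let bounded_measurable_cos k : bounded_measurable (fun w => cos (a * xi k w)).
Proof. exact: bounded_measurable_scale (@continuous_cos R) (@cos_max R). Qed.

Let bounded_measurable_sin k : bounded_measurable (fun w => sin (a * xi k w)).
Proof. exact: bounded_measurable_scale (@continuous_sin R) (@sin_max R). Qed.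

Lemma mean_cos_uniform k :
  mean P (fun w => cos (a * xi k w)) = complex.Re (uniform_charfun D a).
Proof.
apply: (mean_law (xi_unif k) _ _ (integral_uniform_1Dcos hD a)) => [|x].
  exact: measurable_scale _ (@continuous_cos R).
exact: cos_max.
Qed.

Lemma mean_sin_uniform k :
  mean P (fun w => sin (a * xi k w)) = complex.Im (uniform_charfun D a).
Proof.
apply: (mean_law (xi_unif k) _ _ (integral_uniform_1Dsin hD a)) => [|x].
  exact: measurable_scale _ (@continuous_sin R).
exact: sin_max.
Qed.

Lemma cbounded_measurable_expj k : cbounded_measurable (fun w => expj (a * xi k w)).
Proof. by split; [exact: bounded_measurable_cos | exact: bounded_measurable_sin]. Qed.

Lemma cexpectation_expj_uniform k :
  cexpectation P (fun w => expj (a * xi k w)) = uniform_charfun D a.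
Proof.
by rewrite cexpectationE /= mean_cos_uniform mean_sin_uniform; case: uniform_charfun.
Qed.

Lemma cexpectation_sum_expj :
  cexpectation P (fun w => \sum_(k < K) expj (a * xi k w)) = K%:R * uniform_charfun D a.
Proof.
rewrite cexpectation_sum => [|k]; last exact: cbounded_measurable_expj.
under eq_bigr do rewrite cexpectation_expj_uniform.
by rewrite sumr_const card_ord mulr_natl.
Qed.

Lemma cexpectation_sum_expjMr c :
  cexpectation P (fun w => (\sum_(k < K) expj (a * xi k w)) * c) =
  K%:R * uniform_charfun D a * c.
Proof.
rewrite cexpectationMr ?cexpectation_sum_expj //.
exact/cbounded_measurable_sum/cbounded_measurable_expj.
Qed.

Lemma mean_cos_diff k l :
  mean P (fun w => cos (a * xi k w - a * xi l w)) =
  if k == l then 1 else Normc.normc (uniform_charfun D a) ^+ 2.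
Proof.
have [<-|kl] := eqVneq k l.
  by under eq_fun do rewrite subrr cos0; rewrite mean_cst.
have indep_kl := mutually_independent_pair xi_indep kl.
have mean_prod (t : R -> R) : continuous t -> (forall x, `|t x| <= 1) ->
    mean P (fun w => t (a * xi k w) * t (a * xi l w)) =
    mean P (fun w => t (a * xi k w)) * mean P (fun w => t (a * xi l w)).
  move=> ct t1; have mt := measurable_scale ct.
  exact: (mean_indep indep_kl (f := fun x => t (a * x)) (g := fun x => t (a * x)) (c := 1) mt mt).
under eq_fun do rewrite cosB.
rewrite meanD; try exact: bounded_measurableM.
rewrite (mean_prod _ (@continuous_cos R) (@cos_max R)).
rewrite (mean_prod _ (@continuous_sin R) (@sin_max R)).
rewrite !mean_cos_uniform !mean_sin_uniform.
by case: uniform_charfun => x y; rewrite sqr_normc_coord !expr2.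
Qed.

Let bounded_measurable_cos_diff k l :
  bounded_measurable (fun w => cos (a * xi k w - a * xi l w)).
Proof.
under eq_fun do rewrite cosB.
by apply: bounded_measurableD; exact: bounded_measurableM.
Qed.

Lemma bounded_measurable_sqr_normc_sum_expj :
  bounded_measurable (fun w => Normc.normc (\sum_(k < K) expj (a * xi k w)) ^+ 2).
Proof.
under eq_fun do rewrite sqr_normc_sum_expj.
apply: bounded_measurable_sum => k; apply: bounded_measurable_sum => l.
exact: bounded_measurable_cos_diff.
Qed.

Lemma mean_sqr_normc_sum_expj :
  mean P (fun w => Normc.normc (\sum_(k < K) expj (a * xi k w)) ^+ 2) =
  K%:R * (1 + (K%:R - 1) * Normc.normc (uniform_charfun D a) ^+ 2).
Proof.
set s := Normc.normc (uniform_charfun D a) ^+ 2.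
have row k : \sum_(l < K) (if k == l then 1 else s) = K%:R * s + (1 - s).
  rewrite (eq_bigr (fun l => s + (if l == k then 1 - s else 0))); last first.
    by move=> l _; rewrite eq_sym; case: ifP => _; ring.
  by rewrite big_split /= sumr_const card_ord mulr_natl -big_mkcond big_pred1_eq.
under eq_fun do rewrite sqr_normc_sum_expj.
rewrite mean_sum => [|k]; last exact: bounded_measurable_sum (bounded_measurable_cos_diff k).
under eq_bigr => k _ do rewrite (mean_sum P (bounded_measurable_cos_diff k)).
under eq_bigr => k _ do under eq_bigr => l _ do rewrite mean_cos_diff.
under eq_bigr => k _ do rewrite row.
by rewrite sumr_const card_ord -mulr_natl; ring.
Qed.

Lemma expectation_sqr_normc_sum_expjMr c :
  'E_P[fun w => (Normc.normc ((\sum_(k < K) expj (a * xi k w)) * c) ^+ 2)%R]%E =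
  (K%:R * (1 + (K%:R - 1) * Normc.normc (uniform_charfun D a) ^+ 2) *
   Normc.normc c ^+ 2)%:E.
Proof.
under eq_fun do rewrite Normc.normcM exprMn mulrC.
have bS := bounded_measurable_sqr_normc_sum_expj.
rewrite meanE ?meanZ ?mean_sqr_normc_sum_expj 1?mulrC //.
by apply: bounded_measurableM => //; exact: bounded_measurable_cst.
Qed.

End UniformPhases.

Theorem proposition2 (R : realType) (dT : measure_display) (T : measurableType dT)
  (P : probability T R) (K Mbar : nat) (lam d D : R) (thi thj : R)
  (hK : (0 < K)%N) (hM : (0 < Mbar)%N)
  (hlam : 0 < lam) (hd : 0 < d) (hD : 0 < D)
  (hthi : - (pi / 2) < thi < pi / 2) (hthj : - (pi / 2) < thj < pi / 2)
  (xi : 'I_K -> {RV P >-> R})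
  (xi_unif : forall (k : 'I_K) (A : set R), measurable A ->
     P (xi k @^-1` A) = uniform_prob hD A)
  (xi_indep : mutually_independent xi) :
  let G := fun w : T => @corr_coef R K Mbar lam d (fun k => xi k w) thi thj in
  let phi := pi * d / lam * (sin thi - sin thj) in
  let rho := pi * D / lam * (sin thi - sin thj) in
  Normc.normc (cexpectation P G) = `|Mfactor Mbar phi| * `|sinc rho|
  /\
  ('E_P[fun w => (Normc.normc (G w) ^+ 2)%R] =
   (`|Mfactor Mbar phi| ^+ 2 *
    (K%:R^-1 + (1 - K%:R^-1) * `|sinc rho| ^+ 2))%:E)%E.
Proof.
move=> G phi rho.
set a := 2 * pi / lam * (sin thi - sin thj).
set c := array_factor Mbar (2 * phi) / (K * Mbar)%:R.
have -> : G = fun w => (\sum_(k < K) expj (a * xi k w)) * c.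
  by apply/funext => w; rewrite /G corr_coefE -mulrA.
have K0 : K%:R != 0 :> R by rewrite pnatr_eq0 -lt0n.
have M0 : Mbar%:R != 0 :> R by rewrite pnatr_eq0 -lt0n.
have normc_c : Normc.normc c = `|Mfactor Mbar phi| / K%:R.
  rewrite Normc.normcM Normc.normcV normc_nat normc_array_factor // natrM.
  by field; rewrite K0 M0.
have normc_cf : Normc.normc (uniform_charfun D a) = `|sinc rho|.
  rewrite normc_uniform_charfun ?gt_eqF //; congr (`|sinc _|).
  by rewrite /a /rho; field; rewrite gt_eqF.
split.
  rewrite (cexpectation_sum_expjMr xi_unif) Normc.normcM normc_c.
  by rewrite Normc.normcM normc_nat normc_cf; field.
rewrite (expectation_sqr_normc_sum_expjMr xi_unif xi_indep) normc_cf normc_c.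
by congr EFin; field.
Qed.
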